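(* Let $n\ge 2$, $c=(c_1,\dots,c_n)^T$ with $c_k>0$ for all $k$, and fix $i\in\{1,\dots,n\}$. Let $\mathcal{E_D}=\{x\in\mathbb{R}^n:\sum_{k=1}^n (x_k-c_k)^2/c_k^2\le 1\}$ be the Dikin ellipsoid and $\mathcal{H}_i=\{x\in\mathbb{R}^n: x_i=c_i\}$. Define the symmetric matrix $$Q_i=D+\frac{n-3}{c_i^2}E_{ii}+\sum_{j=1,j\neq i}^n\frac{-1}{c_ic_j}(E_{ij}+E_{ji}),\qquad D=\mathrm{diag}\{c_1^{-2},\dots,c_n^{-2}\},$$ i.e. $(Q_i)_{ii}=\frac{n-2}{c_i^2}$, $(Q_i)_{jj}=\frac{1}{c_j^2}$ and $(Q_i)_{ij}=(Q_i)_{ji}=-\frac{1}{c_ic_j}$ for $j\neq i$, all other entries $0$. Then the Lorenz cone with vertex at the origin and base $\mathcal{H}_i\cap\mathcal{E_D}$, together with its reflection through the origin, is represented by $Q_i$: $$\{x\in\mathbb{R}^n: x^TQ_ix\le 0\}=\{\lambda y:\ \lambda\in\mathbb{R},\ y\in\mathcal{H}_i\cap\mathcal{E_D}\}.$$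
   Context: $E_{ij}$ denotes the $n\times n$ matrix whose $(i,j)$ entry is $1$ and all other entries are $0$. *)

From mathcomp Require Import all_boot all_order all_algebra.
From mathcomp Require Import reals.
Set Implicit Arguments. Unset Strict Implicit. Unset Printing Implicit Defensive.
Import Order.TTheory GRing.Theory Num.Theory.
Local Open Scope ring_scope.

(* Vectors of R^n are column vectors 'cV[R]_n; indices 1..n are 'I_n (0-based). *)

Definition dikin {R : realType} {n : nat} (c : 'cV[R]_n) (x : 'cV[R]_n) : Prop :=
  \sum_(k < n) (x k 0 - c k 0) ^+ 2 / (c k 0) ^+ 2 <= 1.

Definition hyperH {R : realType} {n : nat} (c : 'cV[R]_n) (i : 'I_n) (x : 'cV[R]_n) : Prop :=
  x i 0 = c i 0.

Definition Dmat {R : realType} {n : nat} (c : 'cV[R]_n) : 'M[R]_n :=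
  diag_mx (\row_k ((c k 0) ^+ 2)^-1).

(* Q_i = D + (n-3)/c_i^2 E_ii + sum_{j <> i} -1/(c_i c_j) (E_ij + E_ji);
   E_ij is delta_mx i j.  (n-3) is taken in R (so it may be negative). *)
Definition Qmat {R : realType} {n : nat} (c : 'cV[R]_n) (i : 'I_n) : 'M[R]_n :=
  Dmat c + ((n%:R - 3) / (c i 0) ^+ 2) *: delta_mx i i
  + \sum_(j < n | j != i) (- 1 / (c i 0 * c j 0)) *: (delta_mx i j + delta_mx j i).

Definition qform {R : realType} {n : nat} (Q : 'M[R]_n) (x : 'cV[R]_n) : R :=
  (x^T *m Q *m x) 0 0.

(* In the coordinates u_k = x_k / c_k the form reads
   x^T Q_i x = \sum_(j != i) (u_j - u_i)^2 - u_i^2.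
   On H_i (u_i = 1) this is the Dikin sum minus 1, so the cone cuts H_i
   exactly in H_i ∩ E_D.  The form is homogeneous of degree 2, so every x
   of the cone with u_i <> 0 is a multiple of a point of H_i; and when
   u_i = 0 the form is a sum of squares, which forces x = 0. *)
From mathcomp Require Import all_boot all_order all_algebra.
From mathcomp Require Import reals.
From mathcomp Require Import ring.
Set Implicit Arguments. Unset Strict Implicit. Unset Printing Implicit Defensive.
Import Order.TTheory GRing.Theory Num.Theory.
Local Open Scope ring_scope.

Section QuadraticForm.
Variables (R : realType) (n : nat).
Implicit Types (Q : 'M[R]_n) (x : 'cV[R]_n).

Lemma qformE Q x : qform Q x = \sum_a \sum_b x a 0 * Q a b * x b 0.
Proof.
rewrite /qform mxE; under eq_bigr => b _ do rewrite mxE big_distrl /=.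
rewrite exchange_big /=; apply: eq_bigr => a _; apply: eq_bigr => b _.
by rewrite mxE.
Qed.

Lemma qform0 x : qform 0 x = 0.
Proof. by rewrite /qform mulmx0 mul0mx mxE. Qed.

Lemma qformD Q1 Q2 x : qform (Q1 + Q2) x = qform Q1 x + qform Q2 x.
Proof. by rewrite /qform mulmxDr mulmxDl mxE. Qed.

Lemma qformZ k Q x : qform (k *: Q) x = k * qform Q x.
Proof. by rewrite /qform -scalemxAr -scalemxAl mxE. Qed.

Lemma qform_sum (P : pred 'I_n) (F : 'I_n -> 'M[R]_n) x :
  qform (\sum_(j | P j) F j) x = \sum_(j | P j) qform (F j) x.
Proof. exact: (big_morph _ (fun Q1 Q2 => qformD Q1 Q2 x) (qform0 x)). Qed.

Lemma qform_scale a Q x : qform Q (a *: x) = a ^+ 2 * qform Q x.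
Proof.
by rewrite /qform -scalemxAr [(a *: x)^T]linearZ /= -!scalemxAl scalerA mxE expr2.
Qed.

Lemma qform_delta a b x : qform (delta_mx a b) x = x a 0 * x b 0.
Proof.
rewrite qformE (bigD1 a) //= [X in _ + X]big1 ?addr0; last first.
  by move=> a' ha; apply: big1 => b' _; rewrite mxE (negbTE ha) mulr0 mul0r.
rewrite (bigD1 b) //= [X in _ + X]big1 ?addr0; last first.
  by move=> b' hb; rewrite mxE eqxx (negbTE hb) mulr0 mul0r.
by rewrite mxE !eqxx mulr1.
Qed.

Lemma qform_diag (d : 'rV[R]_n) x :
  qform (diag_mx d) x = \sum_k d 0 k * x k 0 ^+ 2.
Proof.
rewrite qformE; apply: eq_bigr => a _.
rewrite (bigD1 a) //= [X in _ + X]big1 ?addr0; last first.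
  by move=> b hb; rewrite mxE eq_sym (negbTE hb) mulr0n mulr0 mul0r.
by rewrite mxE eqxx mulr1n; ring.
Qed.

End QuadraticForm.

Lemma sumr_const_neq (R : pzRingType) n (i : 'I_n) (a : R) :
  \sum_(j < n | j != i) a = n%:R * a - a.
Proof.
have : \sum_(j < n) a = a + \sum_(j < n | j != i) a by rewrite (bigD1 i).
by rewrite sumr_const card_ord mulr_natl => ->; rewrite addrAC subrr add0r.
Qed.

Section LorenzCone.
Variables (R : realType) (n : nat) (c : 'cV[R]_n) (i : 'I_n).
Hypothesis c_neq0 : forall k, c k 0 != 0.
Implicit Types (x y : 'cV[R]_n).

Lemma qform_Qmat x :
  qform (Qmat c i) x =
  \sum_(j < n | j != i) (x j 0 / c j 0 - x i 0 / c i 0) ^+ 2 - (x i 0 / c i 0) ^+ 2.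
Proof.
rewrite /Qmat /Dmat !qformD qformZ qform_diag qform_delta qform_sum.
under eq_bigr => j _ do rewrite mxE.
under [X in _ + X]eq_bigr => j _ do rewrite qformZ qformD !qform_delta.
have expand_sq j : (x j 0 / c j 0 - x i 0 / c i 0) ^+ 2 =
    ((c j 0) ^+ 2)^-1 * x j 0 ^+ 2
    + (- 1 / (c i 0 * c j 0)) * (x i 0 * x j 0 + x j 0 * x i 0)
    + (x i 0 / c i 0) ^+ 2.
  by field; rewrite !c_neq0.
under [in RHS]eq_bigr => j _ do rewrite expand_sq.
rewrite !big_split /= sumr_const_neq (bigD1 i) //=.
by field; rewrite c_neq0.
Qed.

Lemma dikin_qform_Qmat y :
  hyperH c i y -> dikin c y <-> qform (Qmat c i) y <= 0.
Proof.
rewrite /hyperH /dikin qform_Qmat => yi; rewrite yi divff // expr1n subr_le0.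
rewrite (bigD1 i) //= yi subrr expr0n mul0r add0r.
suff -> : \sum_(j < n | j != i) (y j 0 - c j 0) ^+ 2 / c j 0 ^+ 2 =
          \sum_(j < n | j != i) (y j 0 / c j 0 - 1) ^+ 2 by [].
by apply: eq_bigr => j _; field.
Qed.

Lemma qform_Qmat_le0_eq0 x :
  x i 0 = 0 -> qform (Qmat c i) x <= 0 -> x = 0.
Proof.
rewrite qform_Qmat => xi0; rewrite xi0 mul0r expr0n subr0.
under eq_bigr => j _ do rewrite subr0.
move=> le0; have /psumr_eq0P sq_eq0 : \sum_(j | j != i) (x j 0 / c j 0) ^+ 2 = 0.
  by apply/eqP; rewrite eq_le le0 sumr_ge0 // => j _; rewrite sqr_ge0.
apply/matrixP => j k; rewrite (ord1 k) mxE.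
have [-> //|ji] := eqVneq j i.
have /eqP := sq_eq0 (fun j _ => sqr_ge0 _) j ji.
by rewrite sqrf_eq0 mulf_eq0 invr_eq0 (negbTE (c_neq0 j)) orbF => /eqP.
Qed.

Lemma dikin_center : dikin c c.
Proof. by rewrite /dikin big1 // => k _; rewrite subrr expr0n mul0r. Qed.

End LorenzCone.

Theorem mainTheorem3 (R : realType) (n : nat) (hn : (2 <= n)%N)
  (c : 'cV[R]_n) (hc : forall k : 'I_n, 0 < c k 0) (i : 'I_n) :
  forall x : 'cV[R]_n,
    qform (Qmat c i) x <= 0 <->
    exists (lam : R) (y : 'cV[R]_n), hyperH c i y /\ dikin c y /\ x = lam *: y.
Proof.
have c_neq0 k : c k 0 != 0 by rewrite gt_eqF.
move=> x; split; last first.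
  move=> [lam [y [yH [/(dikin_qform_Qmat c_neq0 yH) yD ->]]]].
  by rewrite qform_scale mulr_ge0_le0 ?sqr_ge0.
move=> xQ; have [xi0|xi_neq0] := eqVneq (x i 0) 0.
  exists 0, c; split=> //; split; first exact: dikin_center.
  by rewrite scale0r (qform_Qmat_le0_eq0 c_neq0 xi0 xQ).
pose lam := x i 0 / c i 0.
have lam_neq0 : lam != 0 by rewrite mulf_neq0 ?invr_eq0.
have yH : hyperH c i (lam^-1 *: x).
  by rewrite /hyperH mxE /lam invf_div divfK.
exists lam, (lam^-1 *: x); split=> //; split; last by rewrite scalerA divff ?scale1r.
by rewrite (dikin_qform_Qmat c_neq0 yH) qform_scale mulr_ge0_le0 ?sqr_ge0.
Qed.
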